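(* Let $f:M\to\mathbb R^4=\mathbb H$ be a conformal immersion of a Riemann surface with left normal $N$, and let $\alpha:\tilde M\to\mathbb H$ be a nowhere vanishing, non-constant holomorphic section (i.e. $*d\alpha=N\,d\alpha$) on the universal cover $\tilde M$. Define $\hat T$ by $df\,\hat T\alpha=-d\alpha$ and put $\nu=\hat T\alpha$, $\psi=\begin{pmatrix} f\\ 1\end{pmatrix}$, $e=\begin{pmatrix}1\\0\end{pmatrix}$. Then the prolongation of $\varphi=\pi e\alpha$ is $$\hat\varphi=\psi\nu+e\alpha,$$ i.e. $\hat\varphi$ is the unique lift of $\varphi$ with $\pi\,d\hat\varphi=0$. In particular, if the Darboux transform $\hat f=\hat\varphi\mathbb H$ associated to $\alpha$ maps into $\mathbb R^4$ rather than $S^4$, that is if $\hat T$ is nowhere vanishing, then $\hat f=f+T:M\to\mathbb R^4$ with $T=\hat T^{-1}$.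
   Context: $\mathbb H^2$ is a right quaternionic vector space; $S^4=\mathbb{HP}^1$ with $\mathbb R^4=\mathbb H$ embedded via $x\mapsto\begin{pmatrix}x\\1\end{pmatrix}\mathbb H$. $V=M\times\mathbb H^2$ is the trivial bundle with trivial connection $d$, $L=\psi\mathbb H\subset V$ the line bundle given by $f$, and $\pi:V\to V/L$ the canonical projection. The left normal $N$ of $f$ satisfies $*df=N\,df$. Via $\pi e$, $V/L$ is identified with the trivial $\mathbb H$ bundle, and a section $\varphi=\pi e\alpha$ is holomorphic iff $*d\alpha=N\,d\alpha$. A lift $\hat\varphi$ of $\varphi$ means $\pi\hat\varphi=\varphi$; the unique lift with $\pi d\hat\varphi=0$ is called the prolongation of $\varphi$. *)

From HB Require Import structures.
From mathcomp Require Import all_boot all_order all_algebra.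
From mathcomp Require Import all_classical all_reals all_analysis.
Set Implicit Arguments. Unset Strict Implicit. Unset Printing Implicit Defensive.
Import Order.TTheory GRing.Theory Num.Theory.
Import numFieldNormedType.Exports.
Local Open Scope classical_set_scope.
Local Open Scope ring_scope.

Definition quat (R : realType) := 'rV[R]_4.

Section Quat.
Variable R : realType.

Definition mkq (a b c d : R) : quat R := \row_(i < 4) nth 0 [:: a; b; c; d] i.
Definition qc (q : quat R) (i : nat) : R := q ord0 (inord i).

(* Hamilton product: 1, i, j, k with i j = k *)
Definition qmul (p q : quat R) : quat R :=
  mkq (qc p 0 * qc q 0 - qc p 1 * qc q 1 - qc p 2 * qc q 2 - qc p 3 * qc q 3)
      (qc p 0 * qc q 1 + qc p 1 * qc q 0 + qc p 2 * qc q 3 - qc p 3 * qc q 2)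
      (qc p 0 * qc q 2 - qc p 1 * qc q 3 + qc p 2 * qc q 0 + qc p 3 * qc q 1)
      (qc p 0 * qc q 3 + qc p 1 * qc q 2 - qc p 2 * qc q 1 + qc p 3 * qc q 0).

Definition qone : quat R := mkq 1 0 0 0.
Definition qconj (q : quat R) : quat R := mkq (qc q 0) (- qc q 1) (- qc q 2) (- qc q 3).
Definition qnorm2 (q : quat R) : R := qc q 0 ^+ 2 + qc q 1 ^+ 2 + qc q 2 ^+ 2 + qc q 3 ^+ 2.
Definition qinv (q : quat R) : quat R := (qnorm2 q)^-1 *: qconj q.
Definition qdot (p q : quat R) : R := \sum_(i < 4) p ord0 i * q ord0 i.

Definition H2 := (quat R * quat R)%type.
Definition addV (v w : H2) : H2 := (v.1 + w.1, v.2 + w.2).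
Definition scaleV (v : H2) (l : quat R) : H2 := (qmul v.1 l, qmul v.2 l).
Definition eV : H2 := (qone, 0).
(* the line v H spanned by v (a point of HP^1 when v <> 0) *)
Definition qline (v : H2) : set H2 := [set w | exists l, w = scaleV v l].

(* ---------- the surface: an open set U of R^2 = C ---------- *)
Definition Jrot (X : 'rV[R]_2) : 'rV[R]_2 :=
  \row_(i < 2) nth 0 [:: - X ord0 (inord 1); X ord0 (inord 0)] i.
Definition ex : 'rV[R]_2 := \row_(i < 2) nth 0 [:: 1; 0] i.
Definition ey : 'rV[R]_2 := \row_(i < 2) nth 0 [:: 0; 1] i.

Fixpoint Cn_on (W : normedModType R) (n : nat) (U : set 'rV[R]_2)
    (g : 'rV[R]_2 -> W) : Prop :=
  match n with
  | 0 => forall p, U p -> differentiable g p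
  | n'.+1 => (forall p, U p -> differentiable g p) /\
             forall X : 'rV[R]_2, Cn_on n' U (fun p => 'D_X g p)
  end.
Definition smooth_on (W : normedModType R) (U : set 'rV[R]_2) (g : 'rV[R]_2 -> W) :=
  forall n, Cn_on n U g.

Definition psiV (f : 'rV[R]_2 -> quat R) (p : 'rV[R]_2) : H2 := (f p, qone).

(* pi : V -> V/L, with V/L identified with H via pi e:
   pi_rel f p v l  <->  pi v = pi (e l)  at the point p,
   i.e. v - e l lies in the fibre L_p = psi(p) H *)
Definition pi_rel (f : 'rV[R]_2 -> quat R) (p : 'rV[R]_2) (v : H2) (l : quat R) : Prop :=
  exists mu, v = addV (scaleV eV l) (scaleV (psiV f p) mu).

Definition dV (X : 'rV[R]_2) (chi : 'rV[R]_2 -> H2) (p : 'rV[R]_2) : H2 :=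
  ('D_X (fun q => (chi q).1) p, 'D_X (fun q => (chi q).2) p).

Definition conformal_immersion (U : set 'rV[R]_2) (f : 'rV[R]_2 -> quat R) : Prop :=
  smooth_on U f /\
  forall p, U p ->
    'D_ex f p != 0 /\ qdot ('D_ex f p) ('D_ey f p) = 0 /\
    qdot ('D_ex f p) ('D_ex f p) = qdot ('D_ey f p) ('D_ey f p).

(* N is the left normal of f:  *df = N df, with ( *omega)(X) = omega(J X) *)
Definition left_normal (U : set 'rV[R]_2) (f N : 'rV[R]_2 -> quat R) : Prop :=
  forall p, U p -> qmul (N p) (N p) = - qone /\
    forall X, 'D_(Jrot X) f p = qmul (N p) ('D_X f p).

(* holomorphic section alpha of V/L (phi = pi e alpha):  *d alpha = N d alpha *)
Definition holomorphic_sec (U : set 'rV[R]_2) (N alpha : 'rV[R]_2 -> quat R) : Prop :=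
  smooth_on U alpha /\
  forall p, U p -> forall X, 'D_(Jrot X) alpha p = qmul (N p) ('D_X alpha p).

Definition is_prolongation (U : set 'rV[R]_2) (f alpha : 'rV[R]_2 -> quat R)
    (chi : 'rV[R]_2 -> H2) : Prop :=
  smooth_on U (fun p => (chi p).1) /\ smooth_on U (fun p => (chi p).2) /\
  forall p, U p -> pi_rel f p (chi p) (alpha p) /\
                   forall X, pi_rel f p (dV X chi p) 0.

End Quat.

(* Every lift of phi = pi e alpha is e alpha + psi mu = (alpha + f mu, mu).  As
   d psi = (df, 0), the projection pi of its derivative is pi e (d alpha + df mu),
   so the lift is the prolongation exactly when df mu = - d alpha.  By hypothesis
   mu = nu = That alpha solves this, and it is the only solution because the
   nonzero quaternion df(d/dx) is invertible; the formula
   nu = - df(d/dx)^-1 d alpha(d/dx) also shows that nu is smooth.  Finally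
   psi nu + e alpha = (f + That^-1, 1) nu, and nu != 0 when That != 0. *)

From HB Require Import structures.
From mathcomp Require Import all_boot all_order all_algebra.
From mathcomp Require Import all_classical all_reals all_analysis.
From mathcomp Require Import ring lra.
Import Order.TTheory GRing.Theory Num.Theory.
Import numFieldNormedType.Exports.
Local Open Scope classical_set_scope.
Local Open Scope ring_scope.

Set Implicit Arguments. Unset Strict Implicit. Unset Printing Implicit Defensive.

Section Quaternions.
Variable R : realType.
Implicit Types p q r : quat R.

Lemma qc_mkq0 (a b c d : R) : qc (mkq a b c d) 0 = a.
Proof. by rewrite /qc mxE inordK. Qed.
Lemma qc_mkq1 (a b c d : R) : qc (mkq a b c d) 1 = b.
Proof. by rewrite /qc mxE inordK. Qed.
Lemma qc_mkq2 (a b c d : R) : qc (mkq a b c d) 2 = c.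
Proof. by rewrite /qc mxE inordK. Qed.
Lemma qc_mkq3 (a b c d : R) : qc (mkq a b c d) 3 = d.
Proof. by rewrite /qc mxE inordK. Qed.

Lemma qcD p q k : qc (p + q) k = qc p k + qc q k.
Proof. by rewrite /qc mxE. Qed.
Lemma qcN q k : qc (- q) k = - qc q k.
Proof. by rewrite /qc mxE. Qed.
Lemma qcZ (a : R) q k : qc (a *: q) k = a * qc q k.
Proof. by rewrite /qc mxE. Qed.
Lemma qc0 k : qc (0 : quat R) k = 0.
Proof. by rewrite /qc mxE. Qed.

Definition qcE := (qc_mkq0, qc_mkq1, qc_mkq2, qc_mkq3, qcD, qcN, qcZ, qc0).

Lemma quatE q : q = mkq (qc q 0) (qc q 1) (qc q 2) (qc q 3).
Proof.
apply/rowP => -[[|[|[|[|k]]]] lt_k4]; rewrite mxE /qc //=;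
  by congr (q _ _); apply: val_inj; rewrite /= inordK.
Qed.

Lemma quatP p q : qc p 0 = qc q 0 -> qc p 1 = qc q 1 -> qc p 2 = qc q 2 ->
  qc p 3 = qc q 3 -> p = q.
Proof. by move=> e0 e1 e2 e3; rewrite (quatE p) (quatE q) e0 e1 e2 e3. Qed.

Lemma qmulA p q r : qmul p (qmul q r) = qmul (qmul p q) r.
Proof. by apply: quatP; rewrite /qmul !qcE; ring. Qed.
Lemma qmulDq p q r : qmul (p + q) r = qmul p r + qmul q r.
Proof. by apply: quatP; rewrite /qmul !qcE; ring. Qed.
Lemma qmul1q q : qmul (qone R) q = q.
Proof. by apply: quatP; rewrite /qmul /qone !qcE; ring. Qed.
Lemma qmul0q q : qmul 0 q = 0.
Proof. by apply: quatP; rewrite /qmul !qcE; ring. Qed.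
Lemma qmulq0 q : qmul q 0 = 0.
Proof. by apply: quatP; rewrite /qmul !qcE; ring. Qed.

Lemma qnorm2_neq0 q : q != 0 -> qnorm2 q != 0.
Proof.
apply: contraNneq; rewrite /qnorm2 => n0.
have sqr_eq0 k : qc q k ^+ 2 = 0 -> qc q k = 0 by move/eqP; rewrite sqrf_eq0 => /eqP.
have := sqr_ge0 (qc q 0); have := sqr_ge0 (qc q 1).
have := sqr_ge0 (qc q 2); have := sqr_ge0 (qc q 3).
by move=> *; apply/eqP/quatP; rewrite qc0; apply: sqr_eq0; lra.
Qed.

Lemma qmulVq q : q != 0 -> qmul (qinv q) q = qone R.
Proof.
move/qnorm2_neq0; rewrite /qnorm2 => n0.
by apply: quatP; rewrite /qmul /qinv /qconj /qone /qnorm2 !qcE; field.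
Qed.

Lemma qmulqV q : q != 0 -> qmul q (qinv q) = qone R.
Proof.
move/qnorm2_neq0; rewrite /qnorm2 => n0.
by apply: quatP; rewrite /qmul /qinv /qconj /qone /qnorm2 !qcE; field.
Qed.

Lemma qmulKq q r : q != 0 -> qmul (qinv q) (qmul q r) = r.
Proof. by move=> q0; rewrite qmulA qmulVq // qmul1q. Qed.

Lemma qmul_neq0 q r : q != 0 -> r != 0 -> qmul q r != 0.
Proof. by move=> q0; apply: contraNneq => qr0; rewrite -(qmulKq r q0) qr0 qmulq0. Qed.

Lemma scaleV_eV l : scaleV (eV R) l = (l, 0).
Proof. by rewrite /scaleV qmul1q qmul0q. Qed.

Lemma scaleV_psiV f (x : 'rV[R]_2) mu : scaleV (psiV f x) mu = (qmul (f x) mu, mu).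
Proof. by rewrite /scaleV qmul1q. Qed.

Lemma scaleVA (v : H2 R) p q : scaleV (scaleV v p) q = scaleV v (qmul p q).
Proof. by rewrite /scaleV /= !qmulA. Qed.

Lemma qline_scaleV (v : H2 R) q : q != 0 -> qline (scaleV v q) = qline v.
Proof.
move=> q0; apply/seteqP; split=> w [l ->]; first by exists (qmul q l); rewrite scaleVA.
by exists (qmul (qinv q) l); rewrite scaleVA qmulA qmulqV // qmul1q.
Qed.

Lemma pi_relE f (x : 'rV[R]_2) (v : H2 R) l :
  pi_rel f x v l <-> v.1 = l + qmul (f x) v.2.
Proof.
split=> [[mu ->]|v1]; first by rewrite scaleV_eV scaleV_psiV /addV /= add0r.
by exists v.2; rewrite scaleV_eV scaleV_psiV /addV /= add0r -v1 -surjective_pairing.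
Qed.

End Quaternions.

Lemma near_eq_differentiable (R : realType) (V W : normedModType R) (f g : V -> W) x :
  (\near x, f x = g x) -> differentiable f x -> differentiable g x.
Proof.
move=> fg df; have gxE : g x = f x by rewrite (nbhs_singleton fg).
have Lg : g \o shift x = cst (g x) + 'd f x +o_ 0 id.
  apply/eqaddoP => eps eps0; have /eqaddoP/(_ eps eps0) := diff_locally df.
  have : \forall y \near 0, f (y + x) = g (y + x) by move: fg; rewrite (near_shift 0) subr0.
  move=> fg0 Lf; near=> y; have E : f (y + x) = g (y + x) by near: y.
  suff -> : (g \o shift x - (cst (g x) + 'd f x)) y =
            (f \o shift x - (cst (f x) + 'd f x)) y by near: y.
  by rewrite !fctE /= E gxE.
have dgE : 'd g x = 'd f x :> (V -> W) := diff_unique (diff_continuous df) Lg.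
by apply/diff_locallyP; rewrite dgE; split; [exact: diff_continuous | exact: Lg].
Unshelve. all: by end_near.
Qed.

Section QuatCalculus.
Variables (R : realType) (V : normedModType R).
Implicit Types g h : V -> quat R.

Lemma differentiable_qc g x k :
  differentiable g x -> differentiable (fun y => qc (g y) k) x.
Proof. by move=> dg; apply: differentiable_comp dg (differentiable_coord _ _ _). Qed.

Lemma derive_qc g x v k : derivable g x v -> 'D_v (fun y => qc (g y) k) x = qc ('D_v g x) k.
Proof. by move=> dg; rewrite (derive_mx dg) /qc mxE. Qed.

Global Instance is_derive_qc g x v dg k :
  is_derive x v g dg -> is_derive x v (fun y => qc (g y) k) (qc dg k).
Proof.
move=> gd; have /derivable_mxP gv : derivable g x v by [].
apply: DeriveDef; first exact: gv.
by rewrite derive_qc ?derive_val.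
Qed.

Lemma is_derive_mkq (a b c d : V -> R) x v (da db dc dd : R) :
  is_derive x v a da -> is_derive x v b db -> is_derive x v c dc -> is_derive x v d dd ->
  is_derive x v (fun y => mkq (a y) (b y) (c y) (d y)) (mkq da db dc dd).
Proof.
move=> ha hb hc hd.
have dq : derivable (fun y => mkq (a y) (b y) (c y) (d y)) x v.
  apply/derivable_mxP => i [[|[|[|[|k]]]] lt_k4] //;
    by under eq_fun do rewrite mxE /=; exact: ex_derive.
apply: (DeriveDef dq); rewrite (derive_mx dq); apply/rowP => -[[|[|[|[|k]]]] lt_k4] //;
  by rewrite !mxE /=; under eq_fun do rewrite mxE /=; exact: derive_val.
Qed.

Global Instance is_derive_qmul g h x v dg dh :
  is_derive x v g dg -> is_derive x v h dh ->
  is_derive x v (fun y => qmul (g y) (h y)) (qmul dg (h x) + qmul (g x) dh).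
Proof.
move=> gd hd; rewrite /qmul.
(* the component derivatives are inferred from is_derive_qc and the library
   instances for +, - and * *)
apply: is_derive_eq; first apply: is_derive_mkq.
(* on R, [*:] is the product *)
by apply: quatP; rewrite !qcE /GRing.scale /=; ring.
Qed.

End QuatCalculus.

Section Smoothness.
Variables (R : realType) (U : set 'rV[R]_2).
Hypothesis openU : open U.
Local Notation V2 := 'rV[R]_2.

Lemma Cn_differentiable (W : normedModType R) n (g : V2 -> W) p :
  Cn_on n U g -> U p -> differentiable g p.
Proof. by case: n => [|n] /= => [dg|[dg _]]; apply: dg. Qed.

Lemma Cn_derivable (W : normedModType R) n (g : V2 -> W) p X :
  Cn_on n U g -> U p -> derivable g p X.
Proof. by move=> Cg Up; apply: diff_derivable; exact: Cn_differentiable Cg Up. Qed.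

Lemma smooth_derivable (W : normedModType R) (g : V2 -> W) p X :
  smooth_on U g -> U p -> derivable g p X.
Proof. by move=> Sg; apply: Cn_derivable (Sg 0). Qed.

Lemma Cn_derive (W : normedModType R) n (g : V2 -> W) X :
  Cn_on n.+1 U g -> Cn_on n U (fun p => 'D_X g p).
Proof. by case=> _; apply. Qed.

Lemma Cn_onW (W : normedModType R) n (g : V2 -> W) : Cn_on n.+1 U g -> Cn_on n U g.
Proof. by elim: n g => [|n IH] g /= [dg Dg] //; split=> // X; apply/IH/Dg. Qed.

Lemma Cn_on_eq (W : normedModType R) n (g h : V2 -> W) :
  (forall p, U p -> g p = h p) -> Cn_on n U g -> Cn_on n U h.
Proof.
have near_eq (k l : V2 -> W) p :
    (forall q, U q -> k q = l q) -> U p -> \forall q \near p, k q = l q.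
  by move=> kl Up; near=> q; apply: kl; near: q; exact: openU.
elim: n g h => [|n IH] g h gh /=.
  by move=> dg p Up; apply: near_eq_differentiable (dg p Up); exact: near_eq.
move=> [dg Dg]; split=> [p Up|X].
  by apply: near_eq_differentiable (dg p Up); exact: near_eq.
by apply: IH (Dg X) => p Up; apply: near_eq_derive; exact: near_eq.
Unshelve. all: by end_near.
Qed.

Lemma Cn_onS (W : normedModType R) n (g : V2 -> W) (Dg : V2 -> V2 -> W) :
  (forall p, U p -> differentiable g p) ->
  (forall X p, U p -> 'D_X g p = Dg X p) ->
  (forall X, Cn_on n U (Dg X)) -> Cn_on n.+1 U g.
Proof. by move=> dg DgE CDg; split=> // X; apply: Cn_on_eq (CDg X) => p /DgE. Qed.

Lemma Cn_add (W : normedModType R) n (g h : V2 -> W) :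
  Cn_on n U g -> Cn_on n U h -> Cn_on n U (fun x => g x + h x).
Proof.
elim: n g h => [|n IH] g h Cg Ch;
  last apply: (Cn_onS (Dg := fun X p => 'D_X g p + 'D_X h p)) => [|X p Up|X].
1,2: by move=> p Up; apply: differentiableD;
  [exact: Cn_differentiable Cg Up | exact: Cn_differentiable Ch Up].
- by rewrite deriveD //; [exact: Cn_derivable Cg Up|exact: Cn_derivable Ch Up].
- by apply: IH; exact: Cn_derive.
Qed.

Lemma Cn_opp (W : normedModType R) n (g : V2 -> W) :
  Cn_on n U g -> Cn_on n U (fun x => - g x).
Proof.
elim: n g => [|n IH] g Cg;
  last apply: (Cn_onS (Dg := fun X p => - 'D_X g p)) => [|X p Up|X].
1,2: by move=> p Up; apply: differentiableN; exact: Cn_differentiable Cg Up.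
- by rewrite deriveN //; exact: Cn_derivable Cg Up.
- by apply: IH; exact: Cn_derive.
Qed.

Lemma Cn_mul n (g h : V2 -> R) :
  Cn_on n U g -> Cn_on n U h -> Cn_on n U (fun x => g x * h x).
Proof.
elim: n g h => [|n IH] g h Cg Ch;
  last apply: (Cn_onS (Dg := fun X p => g p * 'D_X h p + h p * 'D_X g p)) => [|X p Up|X].
1,2: by move=> p Up; apply: differentiableM;
  [exact: Cn_differentiable Cg Up | exact: Cn_differentiable Ch Up].
- by rewrite (deriveM (Cn_derivable (X := X) Cg Up) (Cn_derivable (X := X) Ch Up)).
- by apply: Cn_add; apply: IH; first [exact: Cn_onW | exact: Cn_derive].
Qed.

Lemma Cn_inv n (g : V2 -> R) : (forall p, U p -> g p != 0) ->
  Cn_on n U g -> Cn_on n U (fun x => (g x)^-1).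
Proof.
move=> g0; elim: n g g0 => [|n IH] g g0 Cg;
  last apply: (Cn_onS (Dg := fun X p => - ((g p)^-1 * (g p)^-1) * 'D_X g p)) => [|X p Up|X].
1,2: by move=> p Up; apply: differentiableV (g0 p Up); exact: Cn_differentiable Cg Up.
- by rewrite (deriveV (g0 p Up) (Cn_derivable (X := X) Cg Up)) -invfM.
- by apply: Cn_mul; [apply/Cn_opp/Cn_mul; apply: IH g0 (Cn_onW Cg)|exact: Cn_derive].
Qed.

Lemma Cn_scalel (W : normedModType R) n (a : V2 -> R) (w : W) :
  Cn_on n U a -> Cn_on n U (fun x => a x *: w).
Proof.
elim: n a => [|n IH] a Ca;
  last apply: (Cn_onS (Dg := fun X p => 'D_X a p *: w)) => [|X p Up|X].
1,2: by move=> p Up; apply: differentiableZl; exact: Cn_differentiable Ca Up.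
- have da := Cn_differentiable Ca Up.
  by rewrite deriveE ?diffZl ?deriveE //; exact: differentiableZl.
- by apply: IH; exact: Cn_derive.
Qed.

Lemma Cn_qc n (g : V2 -> quat R) k :
  Cn_on n U g -> Cn_on n U (fun x => qc (g x) k).
Proof.
elim: n g => [|n IH] g Cg;
  last apply: (Cn_onS (Dg := fun X p => qc ('D_X g p) k)) => [|X p Up|X].
1,2: by move=> p Up; apply: differentiable_qc; exact: Cn_differentiable Cg Up.
- by rewrite derive_qc //; exact: Cn_derivable Cg Up.
- by apply: IH; exact: Cn_derive.
Qed.

Lemma Cn_quat n (g : V2 -> quat R) :
  Cn_on n U (fun x => qc (g x) 0) -> Cn_on n U (fun x => qc (g x) 1) ->
  Cn_on n U (fun x => qc (g x) 2) -> Cn_on n U (fun x => qc (g x) 3) ->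
  Cn_on n U g.
Proof.
move=> C0 C1 C2 C3.
have -> : g = fun x => qc (g x) 0 *: mkq 1 0 0 0 + qc (g x) 1 *: mkq 0 1 0 0
    + qc (g x) 2 *: mkq 0 0 1 0 + qc (g x) 3 *: mkq 0 0 0 1.
  by apply: funext => x; apply: quatP; rewrite !qcE; ring.
by repeat apply: Cn_add; apply: Cn_scalel.
Qed.

Ltac Cn_poly := repeat first
  [ apply: Cn_add | apply: Cn_opp | apply: Cn_mul | apply: Cn_qc | assumption ].

Lemma Cn_qmul n (g h : V2 -> quat R) :
  Cn_on n U g -> Cn_on n U h -> Cn_on n U (fun x => qmul (g x) (h x)).
Proof.
by move=> Cg Ch; apply: Cn_quat; rewrite /qmul; under eq_fun do rewrite qcE; Cn_poly.
Qed.

Lemma Cn_qinv n (g : V2 -> quat R) : (forall p, U p -> g p != 0) ->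
  Cn_on n U g -> Cn_on n U (fun x => qinv (g x)).
Proof.
move=> g0 Cg; have Cnorm : Cn_on n U (fun x => (qnorm2 (g x))^-1).
  apply: Cn_inv => [p Up|]; first exact: qnorm2_neq0 (g0 p Up).
  by rewrite /qnorm2; under eq_fun do rewrite !expr2; Cn_poly.
by apply: Cn_quat; rewrite /qinv /qconj; under eq_fun do rewrite qcZ qcE; Cn_poly.
Qed.

End Smoothness.

Section Prolongation.
Variables (R : realType) (U : set 'rV[R]_2) (f alpha : 'rV[R]_2 -> quat R).
Hypotheses (openU : open U) (Sf : smooth_on U f) (Salpha : smooth_on U alpha).

Lemma pi_dV_liftP (chi : 'rV[R]_2 -> H2 R) p X :
  (forall q, U q -> pi_rel f q (chi q) (alpha q)) -> U p ->
  derivable (fun q => (chi q).2) p X ->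
  pi_rel f p (dV X chi p) 0 <-> qmul ('D_X f p) (chi p).2 = - 'D_X alpha p.
Proof.
move=> chi_lift Up /derivableP dmu.
have /derivableP df := smooth_derivable (X := X) Sf Up.
have /derivableP dalpha := smooth_derivable (X := X) Salpha Up.
rewrite pi_relE /dV /=.
have -> : 'D_X (fun q => (chi q).1) p = 'D_X (fun q => alpha q + qmul (f q) (chi q).2) p.
  by apply: near_eq_derive; near=> q; apply/pi_relE/chi_lift; near: q; exact: openU.
rewrite derive_val add0r addrA -[X in _ = X]add0r (addrC ('D_X alpha p)).
split=> [/addIr/eqP|->]; first by rewrite addr_eq0 => /eqP.
by rewrite addNr.
Unshelve. all: by end_near.
Qed.

Lemma lift_is_prolongation (mu : 'rV[R]_2 -> quat R) : smooth_on U mu ->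
  (forall p, U p -> forall X, qmul ('D_X f p) (mu p) = - 'D_X alpha p) ->
  is_prolongation U f alpha (fun p => (alpha p + qmul (f p) (mu p), mu p)).
Proof.
move=> Smu dfmu.
have lift p : U p -> pi_rel f p (alpha p + qmul (f p) (mu p), mu p) (alpha p).
  by move=> _; apply/pi_relE.
split; [|split=> // p Up]; first by move=> n; apply: Cn_add => //; apply: Cn_qmul.
split=> [|X]; first exact: lift.
by apply/(pi_dV_liftP lift Up); [exact: smooth_derivable Smu Up | exact: dfmu].
Qed.

Lemma prolongation_dfE (chi : 'rV[R]_2 -> H2 R) p X :
  is_prolongation U f alpha chi -> U p ->
  qmul ('D_X f p) (chi p).2 = - 'D_X alpha p.
Proof.
move=> [_ [Smu chi_prol]] Up.
have chi_lift q : U q -> pi_rel f q (chi q) (alpha q) by case/chi_prol.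
apply/(pi_dV_liftP chi_lift Up); first exact: smooth_derivable Smu Up.
exact: (chi_prol p Up).2.
Qed.

End Prolongation.

Theorem lemma3p3 (R : realType) (U : set 'rV[R]_2)
  (f N alpha That : 'rV[R]_2 -> quat R) :
  open U ->
  conformal_immersion U f ->
  left_normal U f N ->
  holomorphic_sec U N alpha ->
  (forall p, U p -> alpha p != 0) ->
  (exists p q, U p /\ U q /\ alpha p != alpha q) ->
  (* df That alpha = - d alpha *)
  (forall p, U p -> forall X,
      qmul ('D_X f p) (qmul (That p) (alpha p)) = - 'D_X alpha p) ->
  let nu := fun p => qmul (That p) (alpha p) in
  let phihat := fun p => addV (scaleV (psiV f p) (nu p)) (scaleV (eV R) (alpha p)) in
  [/\ is_prolongation U f alpha phihat,
      (forall chi, is_prolongation U f alpha chi ->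
         forall p, U p -> chi p = phihat p)
    & ((forall p, U p -> That p != 0) ->
       forall p, U p ->
         qline (phihat p) = qline (f p + qinv (That p), qone R))].
Proof.
move=> openU [Sf conf] _ [Salpha _] alpha0 _ dfnu nu phihat.
have Dfx0 p : U p -> 'D_(ex R) f p != 0 by move=> Up; case: (conf p Up).
pose nu_ex p := qmul (qinv ('D_(ex R) f p)) (- 'D_(ex R) alpha p).
have nuE p : U p -> nu_ex p = nu p by move=> Up; rewrite /nu_ex -(dfnu p Up) qmulKq ?Dfx0.
have Snu : smooth_on U nu.
  move=> n; apply: (Cn_on_eq openU (g := nu_ex)) => //.
  apply: (Cn_qmul openU); first apply: (Cn_qinv openU Dfx0); last apply: (Cn_opp openU).
    exact: Cn_derive (Sf n.+1).
  exact: Cn_derive (Salpha n.+1).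
have -> : phihat = fun p => (alpha p + qmul (f p) (nu p), nu p).
  by apply: funext => p; rewrite /phihat scaleV_psiV scaleV_eV /addV /= addr0 addrC.
split; first exact: lift_is_prolongation.
- move=> chi chi_prol p Up.
  have [_ [_ /(_ p Up) [/pi_relE chi1E _]]] := chi_prol.
  have mu_nu : (chi p).2 = nu p.
    by rewrite -nuE // /nu_ex -(prolongation_dfE openU Sf Salpha _ chi_prol Up) qmulKq ?Dfx0.
  by rewrite [chi p]surjective_pairing chi1E mu_nu.
- move=> That0 p Up.
  have nu0 : nu p != 0 by apply: qmul_neq0; [exact: That0 | exact: alpha0].
  suff -> : (alpha p + qmul (f p) (nu p), nu p) = scaleV (f p + qinv (That p), qone R) (nu p).
    by rewrite qline_scaleV.
  by rewrite /scaleV /= qmulDq qmul1q /nu qmulKq ?That0 // addrC.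
Qed.
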